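(* Let $R=k[x_1,\dots,x_n]$ be graded by a monoid $P$ as described in the context, let $G$ act on $R$ by permuting the variables, let $\preceq$ be a monomial order, and let $I\subset R$ be a $P$-homogeneous ideal such that $\mathrm{in}_{\preceq}(I)$ is generated in (standard) degrees $\le d$. If $G$ acts monomially on $I$ up to degree $d$ and the action is $P$-compatible, then the Hilbert series of $I$ is $G$-invariant: $g(HS(I,t))=HS(I,t)$ for all $g\in G$.
   Context: $R$ is graded by a monoid $P$ such that every monomial is $P$-homogeneous and the $P$-grading refines the standard grading (each $P$-graded piece is finite dimensional). $HS(I,t)=\sum_{D\in P}\dim_k(I_D)\,t^D$. The action of $G$ is $P$-compatible if for every $g\in G$ the map $\hat g:P\to P$, $\hat g(D)=\deg(g(m))$ for any monomial $m$ with $\deg(m)=D$, is a well-defined endomorphism of $P$; then $G$ acts on power series by $g(\sum_D a_Dt^D)=\sum_D a_Dt^{\hat g(D)}$. For $h\in R$, $\mathrm{mon}(h)$ is the set of monomials of $h$ with nonzero coefficient; $G$ acts monomially on $I$ up to degree $d$ if for every $h\in I$ of standard degree $\le d$ and every $g\in G$ there is $h'\in I$ with $\mathrm{mon}(h')=\mathrm{mon}(g(h))$. *)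

From HB Require Import structures.
From mathcomp Require Import all_boot all_order all_algebra all_fingroup.
From mathcomp Require Export mpoly.
Set Implicit Arguments. Unset Strict Implicit. Unset Printing Implicit Defensive.
Import GRing.Theory.
Local Open Scope ring_scope.

Section Defs.
Variables (n : nat) (k : fieldType).
Local Notation R := {mpoly k[n]}.

Definition ideal_gen (S : R -> Prop) (p : R) : Prop :=
  exists rs : seq (R * R),
    (forall rs1, rs1 \in rs -> S rs1.2) /\
    p = \sum_(rs1 <- rs) rs1.1 * rs1.2.

Definition monomial_order (le : rel 'X_{1..n}) : Prop :=
  [/\ reflexive le, antisymmetric le, transitive le, total le &
      ((forall m, le 0%MM m) /\
       (forall m1 m2 m, le m1 m2 -> le (m1 + m)%MM (m2 + m)%MM))].

Definition is_lead_mon (le : rel 'X_{1..n}) (p : R) (m : 'X_{1..n}) : Prop :=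
  m \in msupp p /\ (forall m', m' \in msupp p -> le m' m).

Definition initial_ideal (le : rel 'X_{1..n}) (I : R -> Prop) : R -> Prop :=
  ideal_gen (fun q => exists f m, [/\ I f, f != 0, is_lead_mon le f m & q = 'X_[m]]).

Definition gen_in_degrees_le (J : R -> Prop) (d : nat) : Prop :=
  exists S : R -> Prop,
    (forall s, S s -> exists e, (e <= d)%N /\ s \is e.-homog) /\
    (forall p, J p <-> ideal_gen S p).

Definition Phomog (P : Type) (deg : 'X_{1..n} -> P) (D : P) (p : R) : Prop :=
  forall m, m \in msupp p -> deg m = D.

Definition Phomog_ideal (P : Type) (deg : 'X_{1..n} -> P) (I : R -> Prop) : Prop :=
  exists S : R -> Prop,
    (forall s, S s -> exists D, Phomog deg D s) /\
    (forall p, I p <-> ideal_gen S p).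

(* Permutation action on monomials, matching msym:
   msym g 'X_[m] = 'X_[mon_act g m]  (i.e. g sends x_i to x_(g i)). *)
Definition mon_act (g : 'S_n) (m : 'X_{1..n}) : 'X_{1..n} :=
  [multinom m ((g^-1)%g i) | i < n].

Definition std_deg_le (h : R) (d : nat) : Prop :=
  forall m, m \in msupp h -> (mdeg m <= d)%N.

Definition acts_monomially (G : {set 'S_n}) (I : R -> Prop) (d : nat) : Prop :=
  forall h, I h -> std_deg_le h d ->
  forall g, g \in G -> exists h', I h' /\ msupp h' =i msupp (msym g h).

Definition lin_indep (B : seq R) : Prop :=
  forall c : seq k, size c = size B ->
    \sum_(i < size B) c`_i *: B`_i = 0 -> forall i, c`_i = 0.

Definition spans (B : seq R) (S : R -> Prop) : Prop :=
  forall p, S p -> exists c : seq k, p = \sum_(i < size B) c`_i *: B`_i.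

Definition has_dim (S : R -> Prop) (r : nat) : Prop :=
  exists B : seq R, [/\ size B = r, (forall b, b \in B -> S b), lin_indep B & spans B S].

Definition Ipiece (P : Type) (deg : 'X_{1..n} -> P) (I : R -> Prop) (D : P) : R -> Prop :=
  fun p => I p /\ Phomog deg D p.

End Defs.

Definition monoid_endo (P : Type) (op : P -> P -> P) (e : P) (f : P -> P) : Prop :=
  f e = e /\ forall a b, f (op a b) = op (f a) (f b).

(* The action of ghat on a power series a = sum_D a_D t^D (coefficients
   in nat, exponents in P):  g(a) = sum_D a_D t^(ghat D).  The predicate
   "ps_act ghat a b" says that g(a) is well defined (every fibre of ghat
   meets the support of a in a finite set) and equals b, i.e.
   b_E = sum_{D : ghat D = E} a_D. *)
Definition ps_act (P : eqType) (ghat : P -> P) (a b : P -> nat) : Prop :=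
  forall E, exists L : seq P,
    [/\ uniq L,
        (forall D, D \in L <-> (ghat D = E /\ a D <> 0%N)) &
        b E = (\sum_(D <- L) a D)%N].

(* Fix g in G and a degree D. If u is the leading monomial of some
   v in I_D, then x^u lies in in(I), which is generated in degrees <= d; hence
   u = w + c where c is the leading monomial of a P-homogeneous f in I of
   standard degree <= d (take the P-component of an element of I with leading
   monomial c). As G acts monomially up to degree d, some h in I has the
   support of g(f), and h x^(g w) is an element of I_(ghat D) whose leading
   monomial for the order transported by g is g(u). Elements with distinct
   leading monomials are independent, while dim I_D is at most the number of
   leading monomials of I_D; thus dim I_D <= dim I_(ghat D). Applied to g^-1
   this gives equality, and ghat g is injective on the degrees carrying a
   nonzero I_D, which is the invariance of the Hilbert series. *)

From HB Require Import structures.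
From mathcomp Require Import all_boot all_order all_algebra all_fingroup.
From mathcomp Require Import mpoly.
From Stdlib Require Import Classical.
Set Implicit Arguments. Unset Strict Implicit.
Import GRing.Theory.
Local Open Scope ring_scope.

Lemma seq_max_exists (T : eqType) (le : rel T) : total le -> transitive le ->
  forall s : seq T, s != [::] -> exists2 x, x \in s & {in s, forall y, le y x}.
Proof.
move=> le_total le_trans; elim=> // a s IH _.
have le_refl : reflexive le by move=> x; case/orP: (le_total x x).
have [->|/IH [x xs x_max]] := eqVneq s [::].
  by exists a; rewrite ?mem_head // => y; rewrite mem_seq1 => /eqP ->.
have [le_ax|le_xa] := orP (le_total a x).
  exists x; first by rewrite inE xs orbT.
  by move=> y; rewrite inE => /predU1P [->|/x_max].
exists a; first exact: mem_head.
by move=> y; rewrite inE => /predU1P [->|/x_max le_yx] //; apply: le_trans le_xa.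
Qed.

Lemma seq_fun_choice (T : eqType) (U : Type) (y0 : U) (s : seq T)
  (Q : T -> U -> Prop) :
  (forall x, x \in s -> exists y, Q x y) ->
  exists f : T -> U, forall x, x \in s -> Q x (f x).
Proof.
elim: s => [|a s IH] HQ; first by exists (fun=> y0).
have [y Qay] := HQ a (mem_head a s).
have [f Hf] : exists f : T -> U, forall x, x \in s -> Q x (f x).
  by apply: IH => x xs; apply: HQ; rewrite inE xs orbT.
exists (fun x => if x == a then y else f x) => x.
by rewrite inE; case: eqP => [-> | _ /Hf].
Qed.

Lemma exists_nonzero_left_kernel (F : fieldType) r s (A : 'M[F]_(r, s)) :
  (s < r)%N -> exists2 c : 'rV_r, c != 0 & c *m A = 0.
Proof.
move=> lt_sr; have : kermx A != 0.
  by rewrite -mxrank_eq0 mxrank_ker subn_eq0 -ltnNge (leq_ltn_trans (rank_leq_col A)).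
by case/rowV0Pn => c /sub_kermxP cA c_nz; exists c.
Qed.

Lemma ps_act_inverse (P : eqType) (f f' : P -> P) (a : P -> nat) :
  (forall D, a D <> 0%N -> f' (f D) = D /\ a (f D) = a D) ->
  (forall E, a E <> 0%N -> f (f' E) = E /\ a (f' E) = a E) ->
  ps_act f a a.
Proof.
move=> f'K fK' E; have [aE0 | /eqP aE_nz] := eqVneq (a E) 0%N.
  exists [::]; split=> // [D|]; last by rewrite big_nil.
  split=> // -[fDE aD_nz]; exfalso; have [_ afD] := f'K D aD_nz.
  by apply: aD_nz; rewrite -afD fDE.
have [ff'E af'E] := fK' E aE_nz.
exists [:: f' E]; split=> // [D|]; last by rewrite big_seq1.
rewrite mem_seq1; split=> [/eqP -> | [fDE aD_nz]]; first by rewrite af'E.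
by have [<- _] := f'K D aD_nz; rewrite fDE.
Qed.

Section LinearAlgebra.
Variables (n : nat) (k : fieldType).
Local Notation R := {mpoly k[n]}.
Implicit Types (B F : seq R) (S : R -> Prop).

Lemma lin_indep_row B (c : 'rV[k]_(size B)) :
  lin_indep B -> \sum_i c 0 i *: B`_i = 0 -> c = 0.
Proof.
move=> indB c0; apply/rowP => i; rewrite mxE.
pose cs := [seq c 0 j | j <- enum 'I_(size B)].
have csE (j : 'I_(size B)) : cs`_j = c 0 j.
  by rewrite (nth_map j) ?size_enum_ord // nth_ord_enum.
rewrite -csE; apply: indB; first by rewrite size_map size_enum_ord.
by rewrite -[RHS]c0; apply: eq_bigr => j _; rewrite csE.
Qed.

Lemma lin_indep_size_le B s (A : 'M[k]_(size B, s)) : lin_indep B ->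
  (forall c : 'rV_(size B), c *m A = 0 -> \sum_i c 0 i *: B`_i = 0) ->
  (size B <= s)%N.
Proof.
move=> indB HA; rewrite leqNgt; apply/negP.
case/(exists_nonzero_left_kernel A) => c /negP c_nz cA.
by apply/c_nz/eqP; apply: lin_indep_row indB (HA c cA).
Qed.

Lemma lin_indep_nonzero B b : lin_indep B -> b \in B -> b != 0.
Proof.
move=> indB /(nthP 0) [i iB <-]; apply/eqP => Bi0; pose i0 := Ordinal iB.
pose c : 'rV[k]_(size B) := \row_j (j == i0)%:R.
have c0 : c = 0.
  apply: lin_indep_row indB _; rewrite (bigD1 i0) //= big1 => [|j /negbTE ji0].
    by rewrite mxE eqxx scale1r Bi0 addr0.
  by rewrite mxE ji0 scale0r.
by move/rowP/(_ i0): c0; rewrite !mxE eqxx => /eqP; rewrite oner_eq0.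
Qed.

Lemma has_dim_witness S r : has_dim S r -> (0 < r)%N -> exists2 p, S p & p != 0.
Proof.
case=> [[|b B] [<- BS indB _]] // _.
by exists b; [apply: BS; rewrite mem_head | apply: lin_indep_nonzero indB (mem_head b B)].
Qed.

Lemma has_dim_le_size_supp S r (L : seq 'X_{1..n}) : has_dim S r ->
  (forall (B : seq R) (c : 'I_(size B) -> k),
     (forall b, b \in B -> S b) -> S (\sum_i c i *: B`_i)) ->
  (forall p, S p -> p != 0 -> exists2 l, l \in L & p@_l != 0) ->
  (r <= size L)%N.
Proof.
move=> [B [<- BS indB _]] S_lin S_supp.
apply: (lin_indep_size_le (A := \matrix_(i, j) B`_i@_(nth 0%MM L j)) indB).
move=> c cA; set v := \sum_i _; apply/eqP; apply: contraT => v_nz.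
have [l lL] := S_supp v (S_lin B (c 0) BS) v_nz.
suff -> : v@_l = 0 by rewrite eqxx.
have jL : (index l L < size L)%N by rewrite index_mem.
move/rowP/(_ (Ordinal jL)): cA; rewrite !mxE => <-.
rewrite raddf_sum; apply/eq_bigr => i _.
by rewrite /= mcoeffZ mxE nth_index.
Qed.

Lemma lin_indep_size_le_dim S r F : has_dim S r -> lin_indep F ->
  (forall f, f \in F -> S f) -> (size F <= r)%N.
Proof.
move=> [B [<- _ _ spanB]] indF FS.
have /fin_all_exists [cf cfE] : forall j : 'I_(size F),
    exists c : seq k, F`_j = \sum_(i < size B) c`_i *: B`_i.
  by move=> j; apply/spanB/FS/mem_nth.
apply: (lin_indep_size_le (A := \matrix_(j, i) (cf j)`_i) indF) => c cA.
under eq_bigr do rewrite cfE scaler_sumr.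
rewrite exchange_big big1 //= => i _.
move/rowP/(_ i): cA; rewrite !mxE => cA.
under eq_bigr do rewrite scalerA.
rewrite -scaler_suml.
suff -> : \sum_j c 0 j * (cf j)`_i = 0 by rewrite scale0r.
by rewrite -[RHS]cA; apply: eq_bigr => j _; rewrite mxE.
Qed.

End LinearAlgebra.

Section LeadingMonomials.
Variables (n : nat) (k : fieldType).
Local Notation R := {mpoly k[n]}.
Variable le : rel 'X_{1..n}.
Hypotheses (le_anti : antisymmetric le) (le_trans : transitive le)
  (le_total : total le).

Lemma lead_mon_exists (p : R) : p != 0 -> exists u, is_lead_mon le p u.
Proof.
rewrite -msupp_eq0 => /(seq_max_exists le_total le_trans) [u up u_max].
by exists u.
Qed.

Lemma lead_mon_mulX (p : R) u w :
  (forall m1 m2 m, le m1 m2 -> le (m1 + m)%MM (m2 + m)%MM) ->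
  is_lead_mon le p u -> is_lead_mon le (p * 'X_[w]) (w + u)%MM.
Proof.
move=> le_add [up u_max].
split=> [|m]; rewrite (perm_mem (msuppMX _ _)); first exact: map_f.
case/mapP => m' m'p ->; rewrite ![(w + _)%MM]addmC.
by apply: le_add; apply: u_max.
Qed.

Lemma lin_indep_distinct_leads (U : seq 'X_{1..n}) (h : 'X_{1..n} -> R) :
  uniq U -> (forall u, u \in U -> is_lead_mon le (h u) u) -> lin_indep (map h U).
Proof.
(* Pick j with c_j != 0 and U_j maximal: U_j occurs in h U_j and in no other
   h U_i with c_i != 0, so the coefficient of U_j in the sum is c_j (h U_j)@_U_j. *)
move=> uniqU leadU c; rewrite size_map => sc sum0 i; apply/eqP/contraT => ci_nz.
have iU : (i < size U)%N.
  by rewrite ltnNge -sc; apply: contra ci_nz => /(nth_default 0) ->.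
have : [seq j <- iota 0 (size U) | c`_j != 0] != [::].
  apply/eqP => /(congr1 (fun s => i \in s)).
  by rewrite mem_filter mem_iota ci_nz add0n iU.
pose leU a b := le (nth 0%MM U a) (nth 0%MM U b).
have leU_total : total leU by move=> a b; apply: le_total.
have leU_trans : transitive leU by move=> a b d; apply: le_trans.
case/(seq_max_exists leU_total leU_trans) => j.
rewrite mem_filter mem_iota /= add0n => /andP [cj_nz jU] j_max.
pose u := nth 0%MM U j; have [uh _] := leadU u (mem_nth 0%MM jU).
move/(congr1 (mcoeff u)): sum0; rewrite mcoeff0 raddf_sum (bigD1 (Ordinal jU)) //=.
rewrite big1 ?addr0 => [|i' i'j]; rewrite /= mcoeffZ (nth_map 0%MM) //.
  by move=> /eqP; move: uh; rewrite mulf_eq0 (negbTE cj_nz) mcoeff_msupp => /negbTE ->.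
have [->|ci'_nz] := eqVneq c`_i' 0; first by rewrite mul0r.
suff /memN_msupp_eq0 -> : u \notin msupp (h (nth 0%MM U i')) by rewrite mulr0.
apply: contra i'j => u_supp; rewrite -val_eqE /= -(nth_uniq 0%MM _ _ uniqU) //.
have [_ le_max] := leadU _ (mem_nth 0%MM (ltn_ord i')).
rewrite eq_sym; apply/eqP/le_anti; rewrite le_max //.
by apply: j_max; rewrite mem_filter ci'_nz mem_iota /= add0n.
Qed.

End LeadingMonomials.

Section IdealGen.
Variables (n : nat) (k : fieldType).
Local Notation R := {mpoly k[n]}.
Variable S : R -> Prop.

Lemma ideal_gen0 : ideal_gen S 0.
Proof. by exists [::]; rewrite big_nil. Qed.

Lemma ideal_genD p q : ideal_gen S p -> ideal_gen S q -> ideal_gen S (p + q).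
Proof.
case=> [r1 [H1 ->]] [r2 [H2 ->]]; exists (r1 ++ r2); rewrite big_cat.
by split=> // x; rewrite mem_cat => /orP [/H1|/H2].
Qed.

Lemma ideal_genM r p : ideal_gen S p -> ideal_gen S (r * p).
Proof.
case=> [rs [H ->]]; exists [seq (r * x.1, x.2) | x <- rs]; split.
  by move=> x /mapP [y yr ->] /=; apply: H.
by rewrite big_map mulr_sumr; apply: eq_bigr => x _; rewrite mulrA.
Qed.

Lemma ideal_genZ c p : ideal_gen S p -> ideal_gen S (c *: p).
Proof. by rewrite -mul_mpolyC; apply: ideal_genM. Qed.

Lemma ideal_gen_sub s : S s -> ideal_gen S s.
Proof.
move=> Ss; exists [:: (1, s)]; rewrite big_seq1 mul1r.
by split=> // x; rewrite mem_seq1 => /eqP ->.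
Qed.

Lemma ideal_gen_sum (T : eqType) (r : seq T) (F : T -> R) :
  (forall x, x \in r -> ideal_gen S (F x)) -> ideal_gen S (\sum_(x <- r) F x).
Proof.
elim: r => [|a r IH] SF; first by rewrite big_nil; apply: ideal_gen0.
rewrite big_cons; apply: ideal_genD; first by apply/SF/mem_head.
by apply: IH => x xr; apply/SF; rewrite inE xr orbT.
Qed.

Lemma msupp_ideal_gen p m : ideal_gen S p -> m \in msupp p ->
  exists s, S s /\ exists a b, b \in msupp s /\ m = (a + b)%MM.
Proof.
case=> [rs [H ->]] /msupp_sum_le /flattenP [l /mapP [x]].
rewrite mem_filter /= => xr -> /msuppM_le /allpairsP [[a b] /= [_ bs ->]].
by exists x.2; split; [apply: H | exists a, b].
Qed.

End IdealGen.

Section PComponents.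
Variables (n : nat) (k : fieldType).
Local Notation R := {mpoly k[n]}.
Variables (P : eqType) (op : P -> P -> P) (deg : 'X_{1..n} -> P).
Hypothesis degD : forall m1 m2, deg (m1 + m2)%MM = op (deg m1) (deg m2).
Implicit Types p : R.

Definition Pcomp (E : P) (p : R) : R :=
  \sum_(m <- msupp p | deg m == E) p@_m *: 'X_[m].

Lemma mcoeff_Pcomp E p m : (Pcomp E p)@_m = if deg m == E then p@_m else 0.
Proof.
rewrite raddf_sum /= big_mkcond /=.
under eq_bigr do rewrite mcoeffZ mcoeffX.
have [mp|mNp] := boolP (m \in msupp p).
  rewrite (bigD1_seq m) ?msupp_uniq //= eqxx mulr1 big1 ?addr0 // => m' m'm.
  by rewrite (negbTE m'm) mulr0 if_same.
rewrite big_seq big1 => [|m' m'p]; first by rewrite (memN_msupp_eq0 mNp) if_same.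
by have [m'm|] := eqVneq m' m; [move: mNp; rewrite -m'm m'p | rewrite mulr0 if_same].
Qed.

Lemma Pcomp_is_linear E : linear (Pcomp E).
Proof.
move=> c p q; apply/mpolyP => m.
rewrite mcoeffD mcoeffZ !mcoeff_Pcomp mcoeffD mcoeffZ.
by case: (deg m == E); rewrite ?mulr0 ?addr0.
Qed.

HB.instance Definition _ E :=
  GRing.isLinear.Build k R R _ (Pcomp E) (Pcomp_is_linear E).

Lemma msupp_Pcomp E p m :
  (m \in msupp (Pcomp E p)) = (deg m == E) && (m \in msupp p).
Proof. by rewrite !mcoeff_msupp mcoeff_Pcomp; case: (deg m == E); rewrite ?eqxx. Qed.

Lemma Phomog_Pcomp E p : Phomog deg E (Pcomp E p).
Proof. by move=> m; rewrite msupp_Pcomp => /andP [/eqP]. Qed.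

Lemma Pcomp_Phomog D E p : Phomog deg D p -> Pcomp E p = if D == E then p else 0.
Proof.
move=> p_hom; apply/mpolyP => m; rewrite mcoeff_Pcomp (fun_if (mcoeff m)) mcoeff0.
have [/p_hom -> //|/memN_msupp_eq0 ->] := boolP (m \in msupp p).
by rewrite !if_same.
Qed.

Lemma Pcomp_lead (le : rel 'X_{1..n}) p c :
  is_lead_mon le p c -> is_lead_mon le (Pcomp (deg c) p) c.
Proof.
case=> cp c_max; split=> [|m]; first by rewrite msupp_Pcomp eqxx.
by rewrite msupp_Pcomp => /andP [_ /c_max].
Qed.

Lemma Phomog_deg_witness D p : Phomog deg D p -> p != 0 -> exists m, deg m = D.
Proof.
by move=> p_hom; rewrite -msupp_eq0; case E: (msupp p) => [|m s] // _;
  exists m; apply: p_hom; rewrite E mem_head.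
Qed.

Lemma Phomog_mulX D p w :
  Phomog deg D p -> Phomog deg (op (deg w) D) (p * 'X_[w]).
Proof.
move=> p_hom m; rewrite (perm_mem (msuppMX _ _)) => /mapP [m' m'p ->].
by rewrite degD (p_hom m' m'p).
Qed.

Lemma ideal_gen_Pcomp (S : R -> Prop) E p :
  (forall s, S s -> exists D, Phomog deg D s) ->
  ideal_gen S p -> ideal_gen S (Pcomp E p).
Proof.
move=> S_hom [rs [rsS ->]]; rewrite linear_sum; apply: ideal_gen_sum => x xrs.
have [D x_hom] := S_hom _ (rsS x xrs).
rewrite (mpolyE x.1) mulr_suml linear_sum; apply: ideal_gen_sum => m _.
rewrite -scalerAl linearZ /= mulrC (Pcomp_Phomog _ (Phomog_mulX (w := m) x_hom)).
apply: ideal_genZ; case: ifP => _; last exact: ideal_gen0.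
by rewrite mulrC; apply/ideal_genM/ideal_gen_sub/rsS.
Qed.

Section PhomogIdeal.
Variables (I : R -> Prop) (I_hom : Phomog_ideal deg I).

Lemma Phomog_idealM r p : I p -> I (r * p).
Proof. by case: I_hom => S [_ IS] /IS Sp; apply/IS/ideal_genM. Qed.

Lemma Phomog_ideal_Pcomp E p : I p -> I (Pcomp E p).
Proof. by case: I_hom => S [S_hom IS] /IS Sp; apply/IS/ideal_gen_Pcomp. Qed.

Lemma Ipiece_lincomb D (B : seq R) (c : 'I_(size B) -> k) :
  (forall b, b \in B -> Ipiece deg I D b) -> Ipiece deg I D (\sum_i c i *: B`_i).
Proof.
move=> BI; split.
  case: I_hom => S [_ IS]; apply/IS/ideal_gen_sum => i _; apply/ideal_genZ/IS.
  by have [] := BI _ (mem_nth 0 (ltn_ord i)).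
move=> m /msupp_sum_le /flattenP [l /mapP [i _ ->]] /msuppZ_le.
by have [_] := BI _ (mem_nth 0 (ltn_ord i)); apply.
Qed.

End PhomogIdeal.

End PComponents.

Section MonomialAction.
Variable n : nat.
Implicit Types (g : 'S_n) (le : rel 'X_{1..n}).

Lemma mon_actK g : cancel (mon_act g) (mon_act g^-1).
Proof. by move=> m; apply/mnmP => i; rewrite !mnmE invgK permK. Qed.

Lemma mon_actVK g : cancel (mon_act g^-1) (mon_act g).
Proof. by move=> m; apply/mnmP => i; rewrite !mnmE invgK permKV. Qed.

Lemma mon_act_inj g : injective (mon_act g).
Proof. exact: can_inj (mon_actK g). Qed.

Lemma mon_actD g a b : mon_act g (a + b)%MM = (mon_act g a + mon_act g b)%MM.
Proof. by apply/mnmP => i; rewrite !(mnmE, mnmDE). Qed.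

Lemma msupp_msym (k : fieldType) g (h : {mpoly k[n]}) m :
  (m \in msupp (msym g h)) = (mon_act g^-1 m \in msupp h).
Proof.
rewrite !mcoeff_msupp mcoeff_sym; congr (h@_ _ != 0).
by apply/mnmP => i; rewrite !mnmE invgK.
Qed.

Definition mon_act_rel g le : rel 'X_{1..n} :=
  fun a b => le (mon_act g^-1 a) (mon_act g^-1 b).

Lemma mon_act_rel_anti g le : antisymmetric le -> antisymmetric (mon_act_rel g le).
Proof. by move=> le_anti a b /le_anti; apply: mon_act_inj. Qed.

Lemma mon_act_rel_trans g le : transitive le -> transitive (mon_act_rel g le).
Proof. by move=> le_trans a b c; apply: le_trans. Qed.

Lemma mon_act_rel_total g le : total le -> total (mon_act_rel g le).
Proof. by move=> le_total a b; apply: le_total. Qed.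

Lemma mon_act_rel_add g le :
  (forall m1 m2 m, le m1 m2 -> le (m1 + m)%MM (m2 + m)%MM) ->
  forall m1 m2 m, mon_act_rel g le m1 m2 -> mon_act_rel g le (m1 + m)%MM (m2 + m)%MM.
Proof. by move=> le_add m1 m2 m; rewrite /mon_act_rel !mon_actD; apply: le_add. Qed.

End MonomialAction.

Lemma bounded_mon_enum n (Q : 'X_{1..n} -> Prop) N :
  (forall u, Q u -> (mdeg u < N)%N) ->
  exists L : seq 'X_{1..n}, uniq L /\ forall u, u \in L <-> Q u.
Proof.
move=> Q_bnd.
have /fin_all_exists [q qQ] : forall u : 'X_{1..n < N}, exists b : bool, b <-> Q u.
  by move=> u; case: (classic (Q u)) => Qu; [exists true | exists false].
exists [seq val u | u <- enum q]; split.
  by rewrite map_inj_uniq ?enum_uniq //; apply: val_inj.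
move=> u; split=> [/mapP [x] | Qu]; first by rewrite mem_enum => qx ->; apply/qQ.
apply/mapP; exists (BMultinom (Q_bnd u Qu)) => //.
by rewrite mem_enum; apply/qQ.
Qed.

Section GroupAction.
Variables (n : nat) (k : fieldType).
Local Notation R := {mpoly k[n]}.
Variables (P : eqType) (op : P -> P -> P) (deg : 'X_{1..n} -> P).
Hypothesis degD : forall m1 m2, deg (m1 + m2)%MM = op (deg m1) (deg m2).
Hypothesis deg_refines : forall m1 m2, deg m1 = deg m2 -> mdeg m1 = mdeg m2.
Variables (le : rel 'X_{1..n}) (I : R -> Prop) (d : nat) (G : {group 'S_n}).
Hypotheses (le_mo : monomial_order le) (I_hom : Phomog_ideal deg I).
Hypothesis in_gen : gen_in_degrees_le (initial_ideal le I) d.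
Hypothesis mono : acts_monomially G I d.
Variable ghat : 'S_n -> P -> P.
Hypothesis ghat_deg :
  forall g, g \in G -> forall m, ghat g (deg m) = deg (mon_act g m).

Lemma lead_mon_low_deg_divisor u v : I v -> v != 0 -> is_lead_mon le v u ->
  exists f c w, [/\ I f, Phomog deg (deg c) f, is_lead_mon le f c,
                    std_deg_le f d & u = (w + c)%MM].
Proof.
move=> Iv v_nz lead_u; have [S0 [S0_hom inI_S0]] := in_gen.
have /inI_S0 /msupp_ideal_gen : initial_ideal le I 'X_[u].
  by apply: ideal_gen_sub; exists v, u.
case/(_ u); first by rewrite msuppX mem_head.
move=> s [S0s [a [b [bs ->]]]]; have [e [le_ed s_hom]] := S0_hom s S0s.
have inI_s : initial_ideal le I s by apply/inI_S0/ideal_gen_sub.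
have [_ [[f [c [If _ lead_c ->]]] [a' [c' []]]]] := msupp_ideal_gen inI_s bs.
rewrite msuppX mem_seq1 => /eqP -> b_def.
exists (Pcomp deg (deg c) f), c, (a + a')%MM; split.
- exact: (Phomog_ideal_Pcomp degD I_hom).
- exact: Phomog_Pcomp.
- exact: Pcomp_lead.
- move=> m; rewrite msupp_Pcomp => /andP [/eqP /deg_refines -> _].
  have mdeg_b : mdeg b = e by move/dhomogP: s_hom; apply.
  by rewrite (leq_trans _ le_ed) // -mdeg_b b_def mdegD leq_addl.
- by rewrite b_def addmA.
Qed.

Lemma lead_mon_transport g f c : g \in G ->
  I f -> Phomog deg (deg c) f -> is_lead_mon le f c -> std_deg_le f d ->
  exists h, [/\ I h, Phomog deg (deg (mon_act g c)) h &
                 is_lead_mon (mon_act_rel g le) h (mon_act g c)].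
Proof.
move=> gG If f_hom [cf c_max] f_low.
have [h [Ih supp_h]] := mono If f_low gG.
have hE m : (m \in msupp h) = (mon_act g^-1 m \in msupp f).
  by rewrite supp_h msupp_msym.
exists h; split=> //.
  move=> m; rewrite hE => /f_hom deg_m.
  by rewrite -(mon_actVK g m) -ghat_deg // deg_m ghat_deg.
split=> [|m]; first by rewrite hE mon_actK.
by rewrite hE /mon_act_rel mon_actK => /c_max.
Qed.

Lemma lead_mon_act g u v : g \in G -> I v -> v != 0 -> is_lead_mon le v u ->
  exists h, [/\ I h, Phomog deg (deg (mon_act g u)) h &
                 is_lead_mon (mon_act_rel g le) h (mon_act g u)].
Proof.
move=> gG Iv v_nz lead_u; have [_ _ _ _ [_ le_add]] := le_mo.
have [f [c [w [If f_hom lead_c f_low ->]]]] := lead_mon_low_deg_divisor Iv v_nz lead_u.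
have [h [Ih h_hom lead_gc]] := lead_mon_transport gG If f_hom lead_c f_low.
exists (h * 'X_[mon_act g w]); rewrite mon_actD; split.
- by rewrite mulrC; apply: (Phomog_idealM I_hom).
- by rewrite degD; apply: Phomog_mulX.
- by apply: lead_mon_mulX => //; apply: mon_act_rel_add.
Qed.

Variable HS : P -> nat.
Hypothesis HS_def : forall D, has_dim (Ipiece deg I D) (HS D).

Definition is_Ipiece_lead D u :=
  exists v, [/\ Ipiece deg I D v, v != 0 & is_lead_mon le v u].

Lemma Ipiece_leads_enum m0 :
  exists L, uniq L /\ forall u, u \in L <-> is_Ipiece_lead (deg m0) u.
Proof.
apply: (bounded_mon_enum (N := (mdeg m0).+1)) => u [v [[_ v_hom] _ [uv _]]].
by rewrite ltnS (deg_refines (v_hom u uv)).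
Qed.

Lemma HS_le_size_leads D L :
  (forall u, is_Ipiece_lead D u -> u \in L) -> (HS D <= size L)%N.
Proof.
move=> leadsL; have [_ _ le_trans le_total _] := le_mo.
apply: has_dim_le_size_supp (HS_def _) _ _ => [B c|p Dp p_nz].
  exact: Ipiece_lincomb.
have [u lead_u] := lead_mon_exists le_trans le_total p_nz.
by exists u; [apply: leadsL; exists p | rewrite -mcoeff_msupp; case: lead_u].
Qed.

Lemma size_leads_le_HS g m0 L : g \in G -> uniq L ->
  (forall u, u \in L -> is_Ipiece_lead (deg m0) u) ->
  (size L <= HS (deg (mon_act g m0)))%N.
Proof.
move=> gG uniqL leadsL; have [_ le_anti le_trans le_total _] := le_mo.
have /(seq_fun_choice 0) [h lead_h] : forall u, u \in map (mon_act g) L ->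
    exists h, [/\ I h, Phomog deg (deg u) h & is_lead_mon (mon_act_rel g le) h u].
  move=> _ /mapP [u /leadsL [v [[Iv _] v_nz lead_u]] ->].
  exact: lead_mon_act gG Iv v_nz lead_u.
rewrite -(size_map (mon_act g)) -(size_map h).
apply: lin_indep_size_le_dim (HS_def _) _ _.
  have leg_anti : antisymmetric (mon_act_rel g le) by apply: mon_act_rel_anti.
  have leg_trans : transitive (mon_act_rel g le) by apply: mon_act_rel_trans.
  have leg_total : total (mon_act_rel g le) by apply: mon_act_rel_total.
  apply: (lin_indep_distinct_leads leg_anti leg_trans leg_total).
  - by rewrite map_inj_uniq //; apply: mon_act_inj.
  - by move=> u /lead_h [].
move=> _ /mapP [_ /mapP [u uL ->] ->]; have [Ih h_hom _] := lead_h _ (map_f _ uL).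
have [v [[_ v_hom] _ [uv _]]] := leadsL u uL.
by split=> // m /h_hom ->; rewrite -!ghat_deg // (v_hom u uv).
Qed.

Lemma HS_le_mon_act g m0 : g \in G -> (HS (deg m0) <= HS (deg (mon_act g m0)))%N.
Proof.
move=> gG; have [L [uniqL memL]] := Ipiece_leads_enum m0.
apply: (@leq_trans (size L)); first by apply: HS_le_size_leads => u /memL.
by apply: size_leads_le_HS => // u /memL.
Qed.

Lemma HS_mon_act g m : g \in G -> HS (deg (mon_act g m)) = HS (deg m).
Proof.
move=> gG; apply/eqP; rewrite eqn_leq HS_le_mon_act // andbT.
by rewrite -{2}(mon_actK g m) HS_le_mon_act ?groupV.
Qed.

End GroupAction.

Theorem mainTheorem13
  (n : nat) (k : fieldType)
  (* the grading monoid (P, op, e) *)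
  (P : eqType) (op : P -> P -> P) (e : P)
  (op_assoc : forall a b c, op a (op b c) = op (op a b) c)
  (op_e_l : forall a, op e a = a) (op_e_r : forall a, op a e = a)
  (* the P-degree of monomials: a monoid morphism, so every monomial is
     P-homogeneous *)
  (deg : 'X_{1..n} -> P)
  (deg0 : deg 0%MM = e)
  (degD : forall m1 m2, deg (m1 + m2)%MM = op (deg m1) (deg m2))
  (* the P-grading refines the standard grading *)
  (deg_refines : forall m1 m2, deg m1 = deg m2 -> mdeg m1 = mdeg m2)
  (* G permutes the variables *)
  (G : {group 'S_n})
  (* monomial order *)
  (le : rel 'X_{1..n}) (le_mo : monomial_order le)
  (* the ideal *)
  (I : {mpoly k[n]} -> Prop) (I_hom : Phomog_ideal deg I)
  (d : nat) (in_gen : gen_in_degrees_le (initial_ideal le I) d)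
  (mono : acts_monomially G I d)
  (* P-compatibility: for g in G, ghat g is an endomorphism of P with
     ghat g (deg m) = deg (g m) *)
  (ghat : 'S_n -> P -> P)
  (ghat_endo : forall g, g \in G -> monoid_endo op e (ghat g))
  (ghat_deg : forall g, g \in G -> forall m, ghat g (deg m) = deg (mon_act g m))
  (* HS(I,t) = sum_D dim_k(I_D) t^D *)
  (HS : P -> nat) (HS_def : forall D, has_dim (Ipiece deg I D) (HS D)) :
  forall g, g \in G -> ps_act (ghat g) HS HS.
Proof.
have HS_deg D : HS D <> 0%N -> exists m, deg m = D.
  move/eqP; rewrite -lt0n => /(has_dim_witness (HS_def D)) [p [_ p_hom]].
  exact: Phomog_deg_witness p_hom.
have ghatK g : g \in G -> forall D, HS D <> 0%N ->
    ghat g^-1%g (ghat g D) = D /\ HS (ghat g D) = HS D.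
  move=> gG _ /HS_deg [m <-]; rewrite !ghat_deg ?groupV // mon_actK.
  split=> //; exact (HS_mon_act degD deg_refines le_mo I_hom in_gen mono
    ghat_deg HS_def m gG).
move=> g gG; apply: ps_act_inverse (ghatK g gG) _.
by rewrite -{1}[g]invgK; apply: ghatK; rewrite groupV.
Qed.
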